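(* The Hausdorff dimension of the space $\mathcal G_2$ of marked groups on two generators satisfies $\dim_H(\mathcal G_2)\ge\log(2)/6$; in particular it is nonzero.
   Context: $\mathcal G_2$ is the set of normal subgroups of the free group $\mathbb F(a,b)$ (equivalently, marked groups with an ordered generating pair, up to marked isomorphism), endowed with the ultrametric $d(N_1,N_2)=e^{-\lambda}$ for $N_1\ne N_2$, where $\lambda$ is the minimal word length (with respect to $a,b$) of an element of $N_1\triangle N_2$. $\log$ is the natural logarithm. *)

From Stdlib Require Import Reals List Bool ClassicalEpsilon.
Import ListNotations.
Open Scope R_scope.

Inductive gen : Type := ga | gb.

Definition gen_eqb (x y : gen) : bool :=
  match x, y with ga, ga => true | gb, gb => true | _, _ => false end.

(** a letter is a generator with an exponent flag: (g,false) = g, (g,true) = g^-1 *)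
Definition letter : Type := (gen * bool)%type.
Definition word : Type := list letter.

Definition flip (l : letter) : letter := (fst l, negb (snd l)).

Definition cancels (l l' : letter) : bool :=
  gen_eqb (fst l) (fst l') && xorb (snd l) (snd l').

Fixpoint reduced (w : word) : Prop :=
  match w with
  | [] => True
  | l :: w' =>
      match w' with
      | [] => True
      | l' :: _ => cancels l l' = false /\ reduced w'
      end
  end.

Definition push (l : letter) (w : word) : word :=
  match w with
  | [] => [l]
  | l' :: w' => if cancels l l' then w' else l :: w
  end.
Definition reduce (w : word) : word := fold_right push [] w.

Definition fmul (u v : word) : word := reduce (u ++ v).
Definition finv (u : word) : word := rev (map flip u).

Record is_normal_subgroup (N : word -> Prop) : Prop := {
  ns_reduced : forall w, N w -> reduced w;
  ns_one : N [];
  ns_mul : forall u v, N u -> N v -> N (fmul u v);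
  ns_inv : forall u, N u -> N (finv u);
  ns_conj : forall g u, reduced g -> N u -> N (fmul (fmul g u) (finv g))
}.

Definition G2 : Type := { N : word -> Prop | is_normal_subgroup N }.

Definition same (N1 N2 : G2) : Prop :=
  forall w, proj1_sig N1 w <-> proj1_sig N2 w.

Definition agree (n : nat) (N1 N2 : G2) : Prop :=
  forall w, reduced w -> (length w < n)%nat ->
    (proj1_sig N1 w <-> proj1_sig N2 w).

Definition dist_spec (N1 N2 : G2) (r : R) : Prop :=
  (same N1 N2 /\ r = 0) \/
  (exists l : nat, agree l N1 N2 /\ ~ agree (S l) N1 N2 /\ r = exp (- INR l)).

Definition dist (N1 N2 : G2) : R :=
  epsilon (inhabits 0) (dist_spec N1 N2).

(** r^s with the convention 0^s = 0 (used only for s > 0) *)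
Definition hpow (r s : R) : R :=
  if Rlt_dec 0 r then Rpower r s else 0.

Definition hausdorff_null (s : R) (X : G2 -> Prop) : Prop :=
  forall delta eps : R, 0 < delta -> 0 < eps ->
  exists (U : nat -> G2 -> Prop) (r : nat -> R),
    (forall x, X x -> exists i, U i x) /\
    (forall i, 0 <= r i <= delta) /\
    (forall i x y, U i x -> U i y -> dist x y <= r i) /\
    (forall n, sum_f_R0 (fun i => hpow (r i) s) n <= eps).

(** dim_H(X) >= c, i.e. c is a lower bound of { s > 0 | H^s(X) = 0 }
    (dim_H X = inf of that set, inf of the empty set = +infinity) *)
Definition hausdorff_dim_ge (X : G2 -> Prop) (c : R) : Prop :=
  forall s, 0 < s -> hausdorff_null s X -> c <= s.

(* The free group F(a,b) acts on states (m, x, f) -- a cursor m in Z, lamps x : Z -> bool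
   and central bits f : nat -> bool -- with a moving the cursor and b toggling the lamp
   under the cursor while adding to each f j the lamp j+1 places behind it.  Words acting
   as a translation of the central bits commute with the whole action, so for every
   beta : nat -> bool those whose translation is supported on beta form a normal subgroup
   N_beta.  A word of length 4n+8 flips exactly the n-th central bit, hence N_beta and
   N_gamma are at distance at least e^-(4n+8) as soon as beta n <> gamma n.  A cover of G_2
   by sets of diameter r_i therefore pulls back to a cover of Cantor space by cylinders of
   depth K_i with e^-(4 K_i + 8) <= r_i; such cylinders only cover when sum 2^-K_i >= 1,
   which keeps sum r_i^s bounded away from 0 for every s <= ln 2 / 4. *)
From Pilot Require Import Defs.
From Stdlib Require Import Reals.
From Stdlib Require Import Lra Lia ZArith List Bool Classical ClassicalEpsilon FunctionalExtensionality.
Import ListNotations.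
Open Scope R_scope.

Lemma cancels_eq_flip (l l' : letter) : cancels l l' = true -> l' = flip l.
Proof. now destruct l as [[|] [|]], l' as [[|] [|]]. Qed.

Lemma cancels_flip (l l' : letter) : cancels (flip l') (flip l) = cancels l l'.
Proof. now destruct l as [[|] [|]], l' as [[|] [|]]. Qed.

Lemma finv_cons (l : letter) (u : word) : finv (l :: u) = finv u ++ [flip l].
Proof. reflexivity. Qed.

Lemma reduced_tail (l : letter) (w : word) : reduced (l :: w) -> reduced w.
Proof. destruct w; simpl; tauto. Qed.

Lemma reduced_push (l : letter) (w : word) : reduced w -> reduced (push l w).
Proof.
  destruct w as [|l' w]; simpl; [auto|]. intro H.
  destruct (cancels l l') eqn:E; [exact (reduced_tail _ _ H)|]. now split.
Qed.

Lemma reduced_reduce (w : word) : reduced (reduce w).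
Proof. induction w; simpl; auto using reduced_push. Qed.

Lemma length_reduce (w : word) : (length (reduce w) <= length w)%nat.
Proof.
  induction w as [|l w IH]; simpl; [lia|].
  destruct (reduce w) as [|l' w']; simpl in *; [lia|].
  destruct (cancels l l'); simpl; lia.
Qed.

Lemma reduced_snoc (w : word) (l : letter) : reduced w ->
  (forall p l', w = p ++ [l'] -> cancels l' l = false) -> reduced (w ++ [l]).
Proof.
  induction w as [|a w IH]; intros Hw Hlast; [exact I|].
  destruct w as [|b w].
  - split; [exact (Hlast [] a eq_refl)|exact I].
  - destruct Hw as [Hab Hw]. simpl. split; [exact Hab|].
    apply IH; [exact Hw|]. intros p l' Hp. exact (Hlast (a :: p) l' (f_equal (cons a) Hp)).
Qed.

Lemma reduced_finv (u : word) : reduced u -> reduced (finv u).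
Proof.
  induction u as [|l u IH]; intro Hu; [exact I|].
  rewrite finv_cons. apply reduced_snoc; [exact (IH (reduced_tail _ _ Hu))|].
  intros p l' Hp. destruct u as [|l'' u].
  - destruct p as [|? [|]]; discriminate.
  - rewrite finv_cons in Hp. apply app_inj_tail in Hp as [_ <-].
    rewrite cancels_flip. exact (proj1 Hu).
Qed.

Section FreeGroupAction.

Variable S : Type.
Variable step : letter -> S -> S.
Hypothesis step_flip : forall l s, step (flip l) (step l s) = s.

Definition act (w : word) (s : S) : S := fold_left (fun s l => step l s) w s.

Lemma act_app (u v : word) (s : S) : act (u ++ v) s = act v (act u s).
Proof. unfold act; now rewrite fold_left_app. Qed.

Lemma act_push (l : letter) (w : word) (s : S) : act (push l w) s = act (l :: w) s.
Proof.
  destruct w as [|l' w]; [reflexivity|]. simpl.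
  destruct (cancels l l') eqn:E; [|reflexivity].
  rewrite (cancels_eq_flip _ _ E). simpl. now rewrite step_flip.
Qed.

Lemma act_reduce (w : word) (s : S) : act (reduce w) s = act w s.
Proof.
  revert s; induction w as [|l w IH]; intro s; [reflexivity|].
  simpl reduce. rewrite act_push. apply IH.
Qed.

Lemma act_finv (u : word) (s : S) : act (finv u) (act u s) = s.
Proof.
  revert s; induction u as [|l u IH]; intro s; [reflexivity|].
  rewrite finv_cons, act_app. simpl act at 2. rewrite IH. apply step_flip.
Qed.

End FreeGroupAction.

Arguments act {S} step w s.

Record state : Type := State { pos : Z; lamps : Z -> bool; centre : nat -> bool }.

Definition toggle (x : Z -> bool) (m : Z) : Z -> bool :=
  fun p => if Z.eqb p m then negb (x p) else x p.

Definition step (l : letter) (s : state) : state :=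
  match l with
  | (ga, false) => State (pos s + 1) (lamps s) (centre s)
  | (ga, true) => State (pos s - 1) (lamps s) (centre s)
  | (gb, _) => State (pos s) (toggle (lamps s) (pos s))
                 (fun j => xorb (centre s j) (lamps s (pos s - Z.of_nat (S j))))
  end.

Lemma step_flip (l : letter) (s : state) : step (flip l) (step l s) = s.
Proof.
  destruct s as [m x f].
  assert (Hb : step (gb, false) (step (gb, false) (State m x f)) = State m x f).
  { cbn [step pos lamps centre]. f_equal; apply functional_extensionality; intro p; unfold toggle.
    - destruct (Z.eqb p m); [apply negb_involutive|reflexivity].
    - destruct (Z.eqb_spec (m - Z.of_nat (S p)) m); [lia|].
      now destruct (f p), (x _). }
  destruct l as [[|] [|]]; [..|exact Hb|exact Hb]; simpl; f_equal; lia.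
Qed.

Definition shift_centre (z : nat -> bool) (s : state) : state :=
  State (pos s) (lamps s) (fun j => xorb (centre s j) (z j)).

Lemma shift_centre_shift_centre (z z' : nat -> bool) (s : state) :
  shift_centre z' (shift_centre z s) = shift_centre (fun j => xorb (z j) (z' j)) s.
Proof.
  unfold shift_centre; simpl. f_equal. apply functional_extensionality; intro j.
  now destruct (centre s j), (z j), (z' j).
Qed.

Lemma shift_centre_involutive (z : nat -> bool) (s : state) :
  shift_centre z (shift_centre z s) = s.
Proof.
  rewrite shift_centre_shift_centre. destruct s as [m x f]. unfold shift_centre; simpl.
  f_equal. apply functional_extensionality; intro j. now destruct (f j), (z j).
Qed.

Lemma act_shift_centre (w : word) (z : nat -> bool) (s : state) :
  act step w (shift_centre z s) = shift_centre z (act step w s).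
Proof.
  revert s; induction w as [|l w IH]; intro s; [reflexivity|].
  simpl act. rewrite <- IH. f_equal. unfold shift_centre.
  destruct l as [[|] [|]]; simpl; try reflexivity;
    f_equal; apply functional_extensionality; intro j;
    now destruct (centre s j), (z j), (lamps s _).
Qed.

Definition centre_subgroup (beta : nat -> bool) (w : word) : Prop :=
  reduced w /\ exists z : nat -> bool, (forall j, beta j = false -> z j = false) /\
    forall s, act step w s = shift_centre z s.

Lemma centre_subgroup_normal (beta : nat -> bool) : is_normal_subgroup (centre_subgroup beta).
Proof.
  constructor.
  - now intros w [Hw _].
  - split; [exact I|]. exists (fun _ => false). split; [auto|].
    intros [m x f]. unfold shift_centre; simpl. f_equal.
    apply functional_extensionality; intro j. now destruct (f j).
  - intros u v [_ [zu [Hzu Hu]]] [_ [zv [Hzv Hv]]]. split; [apply reduced_reduce|].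
    exists (fun j => xorb (zu j) (zv j)). split.
    + intros j Hj. now rewrite Hzu, Hzv.
    + intro s. unfold fmul.
      rewrite act_reduce, act_app, Hu, Hv by exact step_flip. apply shift_centre_shift_centre.
  - intros u [Hr [z [Hz Hu]]]. split; [exact (reduced_finv _ Hr)|].
    exists z. split; [exact Hz|]. intro s.
    rewrite <- (shift_centre_involutive z s) at 1. rewrite <- Hu. exact (act_finv _ _ step_flip u _).
  - intros g u _ [_ [z [Hz Hu]]]. split; [apply reduced_reduce|].
    exists z. split; [exact Hz|]. intro s. unfold fmul.
    rewrite !act_reduce, !act_app, act_reduce, act_app, Hu, act_shift_centre, act_finv
      by exact step_flip.
    reflexivity.
Qed.

Definition embed (beta : nat -> bool) : G2 := exist _ _ (centre_subgroup_normal beta).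

Lemma act_repeat_a (k : nat) (s : state) :
  act step (repeat (ga, false) k) s = State (pos s + Z.of_nat k) (lamps s) (centre s).
Proof.
  revert s; induction k as [|k IH]; intro s; simpl act.
  - destruct s; simpl. f_equal; lia.
  - rewrite IH. simpl. f_equal; lia.
Qed.

Lemma act_repeat_ainv (k : nat) (s : state) :
  act step (repeat (ga, true) k) s = State (pos s - Z.of_nat k) (lamps s) (centre s).
Proof.
  revert s; induction k as [|k IH]; intro s; simpl act.
  - destruct s; simpl. f_equal; lia.
  - rewrite IH. simpl. f_equal; lia.
Qed.

(* Since b acts as an involution, this is the square of the commutator of b and a^(n+1). *)
Definition probe_word (n : nat) : word :=
  let b := [(gb, false)] in
  let an := repeat (ga, false) (S n) in
  let an' := repeat (ga, true) (S n) in
  b ++ an ++ b ++ an' ++ b ++ an ++ b ++ an'.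

Lemma length_probe_word (n : nat) : length (probe_word n) = (4 * n + 8)%nat.
Proof. unfold probe_word. rewrite !length_app, !repeat_length. simpl. lia. Qed.

Lemma act_probe_word (n : nat) (s : state) :
  act step (probe_word n) s = shift_centre (fun j => Nat.eqb j n) s.
Proof.
  destruct s as [m x f]. unfold probe_word.
  rewrite !act_app, act_repeat_a, act_repeat_ainv, act_repeat_a, act_repeat_ainv.
  cbn [act fold_left step pos lamps centre].
  unfold shift_centre, toggle; cbn [pos lamps centre].
  set (k := Z.of_nat (S n)).
  replace (m + k - k)%Z with m by lia.
  f_equal; [lia| |].
  - apply functional_extensionality; intro p.
    repeat match goal with |- context [Z.eqb ?a ?b] => destruct (Z.eqb_spec a b) end;
      try lia; now destruct (x p).
  - apply functional_extensionality; intro j.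
    destruct (Nat.eqb_spec j n) as [->|Hjn].
    + replace (m + k - Z.of_nat (S n))%Z with m by (unfold k; lia).
      repeat match goal with |- context [Z.eqb ?a ?b] => destruct (Z.eqb_spec a b) end;
        try (unfold k in *; lia).
      now destruct (f n), (x m), (x (m - _)%Z).
    + repeat match goal with |- context [Z.eqb ?a ?b] => destruct (Z.eqb_spec a b) end;
        try (unfold k in *; lia).
      now destruct (f j), (x (m - _)%Z), (x (m + k - _)%Z).
Qed.

Lemma embed_probe_word (beta : nat -> bool) (n : nat) :
  proj1_sig (embed beta) (reduce (probe_word n)) <-> beta n = true.
Proof.
  split.
  - intros [_ [z [Hz Hact]]].
    specialize (Hact (State 0 (fun _ => false) (fun _ => false))).
    rewrite act_reduce, act_probe_word in Hact by exact step_flip.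
    apply (f_equal (fun s => centre s n)) in Hact. simpl in Hact.
    rewrite Nat.eqb_refl in Hact.
    destruct (beta n) eqn:E; [reflexivity|]. now rewrite (Hz n E) in Hact.
  - intro Hb. split; [apply reduced_reduce|]. exists (fun j => Nat.eqb j n). split.
    + intros j Hj. destruct (Nat.eqb_spec j n); congruence.
    + intro s. rewrite act_reduce by exact step_flip. apply act_probe_word.
Qed.

Lemma exp_le_compat (x y : R) : x <= y -> exp x <= exp y.
Proof. intro H. destruct (Req_dec x y) as [->|E]; [lra|]. left; apply exp_increasing; lra. Qed.

Lemma first_disagreement (n : nat) (N1 N2 : G2) :
  ~ agree n N1 N2 -> exists l, agree l N1 N2 /\ ~ agree (S l) N1 N2.
Proof.
  induction n as [|n IH]; intro Hn.
  - exfalso. apply Hn. intros w _ H. lia.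
  - destruct (classic (agree n N1 N2)) as [Ha|Ha]; [now exists n|exact (IH Ha)].
Qed.

Lemma dist_spec_exists (N1 N2 : G2) : exists r, dist_spec N1 N2 r.
Proof.
  destruct (classic (same N1 N2)) as [Hs|Hs]; [exists 0; now left|].
  apply not_all_ex_not in Hs as [w Hw].
  assert (Hr : reduced w).
  { destruct N1 as [M1 HM1], N2 as [M2 HM2]; simpl in Hw.
    destruct (classic (M1 w)) as [H1|H1]; [exact (ns_reduced _ HM1 _ H1)|].
    destruct (classic (M2 w)) as [H2|H2]; [exact (ns_reduced _ HM2 _ H2)|].
    exfalso; apply Hw; tauto. }
  assert (Hn : ~ agree (S (length w)) N1 N2) by (intro Ha; apply Hw, Ha; auto).
  destruct (first_disagreement _ _ _ Hn) as [l [Hl HSl]].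
  exists (exp (- INR l)). right. now exists l.
Qed.

Lemma dist_ge_of_separating_word (N1 N2 : G2) (w : word) (L : nat) :
  reduced w -> (length w <= L)%nat -> ~ (proj1_sig N1 w <-> proj1_sig N2 w) ->
  exp (- INR L) <= Defs.dist N1 N2.
Proof.
  intros Hr HL Hw. unfold Defs.dist.
  destruct (epsilon_spec (inhabits 0) _ (dist_spec_exists N1 N2)) as [[Hsame _]|[l [Hl [_ ->]]]].
  - exfalso; apply Hw, Hsame.
  - apply exp_le_compat, Ropp_le_contravar, le_INR.
    destruct (Nat.le_gt_cases l (length w)); [lia|].
    exfalso; apply Hw, Hl; assumption.
Qed.

Lemma embed_dist_ge (beta gamma : nat -> bool) (n : nat) : beta n <> gamma n ->
  exp (- INR (4 * n + 8)) <= Defs.dist (embed beta) (embed gamma).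
Proof.
  intro Hn. apply (dist_ge_of_separating_word _ _ (reduce (probe_word n))).
  - apply reduced_reduce.
  - rewrite <- length_probe_word. apply length_reduce.
  - rewrite !embed_probe_word. destruct (beta n), (gamma n); intuition congruence.
Qed.

Lemma sum_f_R0_le_mono (f : nat -> R) (N M : nat) :
  (forall i, 0 <= f i) -> (N <= M)%nat -> sum_f_R0 f N <= sum_f_R0 f M.
Proof. intros Hf HNM. induction HNM as [|M _ IH]; simpl; [lra|]. specialize (Hf (S M)). lra. Qed.

Lemma term_le_sum_f_R0 (f : nat -> R) (i : nat) : (forall i, 0 <= f i) -> f i <= sum_f_R0 f i.
Proof.
  intro Hf. destruct i as [|i]; simpl; [lra|].
  pose proof (cond_pos_sum f i Hf). lra.
Qed.

Lemma partial_sums_split (f g : nat -> R) (c : R) :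
  (forall i, 0 <= f i) -> (forall i, 0 <= g i) ->
  (forall N, sum_f_R0 f N + sum_f_R0 g N <= 2 * c) ->
  (forall N, sum_f_R0 f N <= c) \/ (forall N, sum_f_R0 g N <= c).
Proof.
  intros Hf Hg Hfg. apply NNPP. intros [Nf Ng]%not_or_and.
  apply not_all_ex_not in Nf as [N1 H1], Ng as [N2 H2].
  pose proof (sum_f_R0_le_mono f N1 (Nat.max N1 N2) Hf (Nat.le_max_l _ _)).
  pose proof (sum_f_R0_le_mono g N2 (Nat.max N1 N2) Hg (Nat.le_max_r _ _)).
  specialize (Hfg (Nat.max N1 N2)). lra.
Qed.

Lemma pow2_pos (k : nat) : 0 < 2 ^ k.
Proof. apply pow_lt; lra. Qed.

Lemma inv_pow2_le_double (a b : nat) : (b <= S a)%nat -> / 2 ^ a <= 2 * / 2 ^ b.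
Proof.
  intro Hba.
  assert (Hb : 2 ^ b <= 2 * 2 ^ a) by (apply (Rle_pow 2 b (S a)); [lra|lia]).
  pose proof (pow2_pos a). pose proof (pow2_pos b).
  apply (Rinv_le_contravar _ _ (pow2_pos b)) in Hb. rewrite Rinv_mult in Hb. lra.
Qed.

Section CylinderCover.

Variable P : nat -> (nat -> bool) -> Prop.
Variable K : nat -> nat.
Hypothesis P_in_cylinder : forall i b g j, P i b -> P i g -> (j < K i)%nat -> b j = g j.
Variable c : R.

Definition meets_prefix (i n : nat) (g : nat -> bool) : Prop :=
  exists b, P i b /\ forall j, (j < n)%nat -> b j = g j.

(* The uniform measure of the depth-[K i] cylinder around [P i], relative to that of
   the depth-[n] cylinder around [g]. *)
Definition weight (i n : nat) (g : nat -> bool) : R :=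
  if excluded_middle_informative (meets_prefix i n g) then / 2 ^ (K i - n) else 0.

Definition light (n : nat) (g : nat -> bool) : Prop :=
  forall N, sum_f_R0 (fun i => weight i n g) N <= c.

Definition set_bit (g : nat -> bool) (n : nat) (b : bool) : nat -> bool :=
  fun j => if Nat.eqb j n then b else g j.

Lemma weight_nonneg (i n : nat) (g : nat -> bool) : 0 <= weight i n g.
Proof.
  unfold weight; destruct (excluded_middle_informative _); [|lra].
  left; apply Rinv_0_lt_compat, pow2_pos.
Qed.

Lemma meets_prefix_set_bit (i n : nat) (g : nat -> bool) (b : bool) :
  meets_prefix i (S n) (set_bit g n b) -> meets_prefix i n g.
Proof.
  intros [d [Hd Hj]]. exists d; split; [exact Hd|].
  intros j Hjn. rewrite Hj by lia. unfold set_bit.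
  destruct (Nat.eqb_spec j n); [lia|reflexivity].
Qed.

Lemma weight_set_bit (i n : nat) (g : nat -> bool) :
  weight i (S n) (set_bit g n false) + weight i (S n) (set_bit g n true) <= 2 * weight i n g.
Proof.
  unfold weight.
  destruct (excluded_middle_informative (meets_prefix i (S n) (set_bit g n false))) as [H0|H0];
  destruct (excluded_middle_informative (meets_prefix i (S n) (set_bit g n true))) as [H1|H1];
  destruct (excluded_middle_informative (meets_prefix i n g)) as [H|H];
  try (exfalso; apply H; eapply meets_prefix_set_bit; eassumption);
  try (pose proof (inv_pow2_le_double (K i - S n) (K i - n) ltac:(lia)); lra).
  - assert (HK : (K i <= n)%nat).
    { destruct (le_lt_dec (K i) n) as [Hle|Hlt]; [exact Hle|exfalso].
      destruct H0 as [d0 [Hd0 Hj0]], H1 as [d1 [Hd1 Hj1]].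
      pose proof (P_in_cylinder i d0 d1 n Hd0 Hd1 Hlt) as E.
      rewrite Hj0, Hj1 in E by lia. unfold set_bit in E. rewrite Nat.eqb_refl in E.
      discriminate. }
    replace (K i - S n)%nat with 0%nat by lia. replace (K i - n)%nat with 0%nat by lia.
    simpl. lra.
  - assert (0 < / 2 ^ (K i - n)) by apply Rinv_0_lt_compat, pow2_pos. lra.
Qed.

Lemma light_set_bit (n : nat) (g : nat -> bool) :
  light n g -> light (S n) (set_bit g n false) \/ light (S n) (set_bit g n true).
Proof.
  intro Hg. apply partial_sums_split with (c := c);
    [intro; apply weight_nonneg|intro; apply weight_nonneg|].
  intro N. rewrite <- sum_plus.
  apply Rle_trans with (2 * sum_f_R0 (fun i => weight i n g) N); [|specialize (Hg N); lra].
  rewrite scal_sum. apply sum_Rle. intros i _. rewrite Rmult_comm. apply weight_set_bit.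
Qed.

Fixpoint light_path (n : nat) : nat -> bool :=
  match n with
  | O => fun _ => false
  | S n => if excluded_middle_informative (light (S n) (set_bit (light_path n) n false))
           then set_bit (light_path n) n false else set_bit (light_path n) n true
  end.

Lemma light_path_light (n : nat) : light 0 (fun _ => false) -> light n (light_path n).
Proof.
  intro H0. induction n as [|n IH]; [exact H0|]. simpl.
  destruct (excluded_middle_informative _) as [H|H]; [exact H|].
  destruct (light_set_bit n _ IH); tauto.
Qed.

Definition light_limit (j : nat) : bool := light_path (S j) j.

Lemma light_path_limit (n j : nat) : (j < n)%nat -> light_path n j = light_limit j.
Proof.
  induction n as [|n IH]; intro Hj; [lia|].
  destruct (Nat.eq_dec j n) as [->|Hne]; [reflexivity|].
  simpl. destruct (excluded_middle_informative _); unfold set_bit;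
    destruct (Nat.eqb_spec j n); try lia; apply IH; lia.
Qed.

Theorem cylinders_not_cover : c < 1 -> (forall N, sum_f_R0 (fun i => / 2 ^ K i) N <= c) ->
  exists beta, forall i, ~ P i beta.
Proof.
  intros Hc Hsum. exists light_limit. intros i Hi.
  assert (H0 : light 0 (fun _ => false)).
  { intro N. eapply Rle_trans; [|apply (Hsum N)]. apply sum_Rle. intros k _.
    unfold weight. destruct (excluded_middle_informative _).
    - rewrite Nat.sub_0_r. lra.
    - left; apply Rinv_0_lt_compat, pow2_pos. }
  assert (Hone : weight i (K i) (light_path (K i)) = 1).
  { unfold weight. destruct (excluded_middle_informative _) as [_|Hn].
    - rewrite Nat.sub_diag. simpl. lra.
    - exfalso; apply Hn. exists light_limit. split; [exact Hi|].
      intros j Hj. symmetry; apply light_path_limit, Hj. }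
  pose proof (light_path_light (K i) H0 i).
  pose proof (term_le_sum_f_R0 (fun k => weight k (K i) (light_path (K i))) i
    (fun k => weight_nonneg _ _ _)).
  simpl in *. lra.
Qed.

End CylinderCover.

Lemma least_index_le (a : nat -> R) (r : R) :
  (exists n, a n <= r) -> exists K, a K <= r /\ forall j, (j < K)%nat -> r < a j.
Proof.
  intro Hex.
  destruct (Wf_nat.dec_inh_nat_subset_has_unique_least_element (fun n => a n <= r)
    (fun n => classic _) Hex) as [K [[HK Hmin] _]].
  exists K. split; [exact HK|]. intros j Hj.
  destruct (Rlt_le_dec r (a j)) as [Hlt|Hle]; [exact Hlt|]. specialize (Hmin j Hle). lia.
Qed.

Lemma hpow_nonneg (r s : R) : 0 <= hpow r s.
Proof. unfold hpow. destruct (Rlt_dec 0 r); [left; apply exp_pos|lra]. Qed.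

(* The distance exponent grows like [4 K] while the depth is [K], hence the threshold
   [4 s <= ln 2]. *)
Lemma inv_pow2_le_hpow (s r : R) (K : nat) : 0 < s -> 4 * s <= ln 2 ->
  exp (- INR (4 * K + 8)) <= r -> / 2 ^ K <= 4 * hpow r s.
Proof.
  intros Hs Hs4 Hr.
  assert (Hr0 : 0 < r) by (pose proof (exp_pos (- INR (4 * K + 8))); lra).
  unfold hpow. destruct (Rlt_dec 0 r) as [_|]; [|lra].
  assert (Hexp : Rpower 2 (- INR (K + 2)) <= Rpower r s).
  { apply Rle_trans with (Rpower (exp (- INR (4 * K + 8))) s);
      [|apply Rle_Rpower_l; [lra|split; [apply exp_pos|exact Hr]]].
    unfold Rpower. rewrite ln_exp. apply exp_le_compat.
    rewrite !plus_INR, mult_INR. simpl (INR 2). simpl (INR 4). simpl (INR 8).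
    pose proof (pos_INR K). nra. }
  rewrite Rpower_Ropp, Rpower_pow, pow_add in Hexp by lra.
  pose proof (pow2_pos K). simpl (2 ^ 2) in Hexp. rewrite Rinv_mult in Hexp. lra.
Qed.

Lemma embed_agree_below (U : G2 -> Prop) (r : R) (b g : nat -> bool) (j : nat) :
  (forall x y, U x -> U y -> Defs.dist x y <= r) -> U (embed b) -> U (embed g) ->
  r < exp (- INR (4 * j + 8)) -> b j = g j.
Proof.
  intros Hdiam Hb Hg Hr. destruct (bool_dec (b j) (g j)) as [E|E]; [exact E|].
  pose proof (embed_dist_ge b g j E). pose proof (Hdiam _ _ Hb Hg). lra.
Qed.

Lemma embed_preimage_cylinder (U : G2 -> Prop) (r s : R) (m : nat) :
  0 < s -> 4 * s <= ln 2 -> (forall x y, U x -> U y -> Defs.dist x y <= r) ->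
  exists K : nat,
    (forall b g j, U (embed b) -> U (embed g) -> (j < K)%nat -> b j = g j) /\
    / 2 ^ K <= 4 * hpow r s + / 2 ^ m.
Proof.
  intros Hs Hs4 Hdiam.
  assert (Hm : 0 < / 2 ^ m) by apply Rinv_0_lt_compat, pow2_pos.
  pose proof (hpow_nonneg r s).
  destruct (Rlt_le_dec 0 r) as [Hr|Hr].
  - destruct (least_index_le (fun j => exp (- INR (4 * j + 8))) r) as [K [HK Hbelow]].
    { destruct (INR_unbounded (- ln r)) as [n Hn]. exists n.
      rewrite <- (exp_ln r Hr). apply exp_le_compat.
      pose proof (le_INR n (4 * n + 8) ltac:(lia)). lra. }
    exists K. split.
    + intros b g j Hb Hg Hj. exact (embed_agree_below U r b g j Hdiam Hb Hg (Hbelow j Hj)).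
    + pose proof (inv_pow2_le_hpow s r K Hs Hs4 HK). lra.
  - exists m. split; [|lra].
    intros b g j Hb Hg _. apply (embed_agree_below U r b g j Hdiam Hb Hg).
    pose proof (exp_pos (- INR (4 * j + 8))). lra.
Qed.

Lemma sum_inv_pow2_shift (N : nat) : sum_f_R0 (fun i => / 2 ^ (i + 3)) N = 1/4 - / 2 ^ (N + 3).
Proof.
  induction N as [|N IH]; simpl sum_f_R0; [simpl; lra|].
  rewrite IH. replace (S N + 3)%nat with (S (N + 3)) by lia.
  simpl (2 ^ S _). rewrite Rinv_mult. lra.
Qed.

Theorem corollary6p7 :
  hausdorff_dim_ge (fun _ : G2 => True) (ln 2 / 6).
Proof.
  intros s Hs Hnull.
  destruct (Rle_lt_dec (ln 2 / 6) s) as [Hle|Hlt]; [exact Hle|exfalso].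
  assert (Hs4 : 4 * s <= ln 2) by lra.
  destruct (Hnull 1 (1/8) ltac:(lra) ltac:(lra)) as [U [r [Hcov [_ [Hdiam Hsum]]]]].
  destruct (choice _ (fun i => embed_preimage_cylinder (U i) (r i) s (i + 3) Hs Hs4 (Hdiam i)))
    as [K HK].
  destruct (cylinders_not_cover (fun i b => U i (embed b)) K (fun i => proj1 (HK i)) (3/4))
    as [beta Hbeta].
  - lra.
  - intro N.
    apply Rle_trans with (sum_f_R0 (fun i => hpow (r i) s * 4 + / 2 ^ (i + 3)) N).
    + apply sum_Rle. intros i _. rewrite Rmult_comm. exact (proj2 (HK i)).
    + rewrite sum_plus, <- scal_sum, sum_inv_pow2_shift.
      pose proof (Hsum N). pose proof (pow2_pos (N + 3)).
      assert (0 < / 2 ^ (N + 3)) by (apply Rinv_0_lt_compat; lra). lra.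
  - destruct (Hcov (embed beta) I) as [i Hi]. exact (Hbeta i Hi).
Qed.
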